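(* Let $\lambda$ be a complex algebraic number of degree $d$ and height $H$, and assume $|\lambda|\neq 1$. Then \[ \big||\lambda|-1\big| > \frac{1}{\sqrt{3}\,(2d+2)^{2d+3}\,2^{2d}\,(d!)^{2d}\,(d+1)^{2d(d-1)}\,H^{2d^2}}. \] In particular, if the minimal polynomial of $\lambda$ has degree at most $d$ and coefficients of bitsize at most $\tau$, then $\big||\lambda|-1\big| > 2^{-(\tau d)^{O(1)}}$.
   Context: The minimal polynomial of an algebraic number $\mu$ is the unique irreducible polynomial $p_\mu\in\mathbb{Z}[x]$ with pairwise coprime coefficients (and positive leading coefficient) vanishing at $\mu$. The height of $\mu$ is the maximum absolute value of the coefficients of $p_\mu$; the degree of $\mu$ is the degree of $p_\mu$. *)

From HB Require Import structures.
From mathcomp Require Import all_boot all_order all_algebra all_field.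
Set Implicit Arguments. Unset Strict Implicit. Unset Printing Implicit Defensive.
Import Order.TTheory GRing.Theory Num.Theory.
Local Open Scope ring_scope.

Definition coef_gcd (p : {poly int}) : int :=
  \big[gcdz/0]_(i < size p) p`_i.

Definition irreducible_Zpoly (p : {poly int}) : Prop :=
  p != 0 /\ ~~ (p \is a GRing.unit) /\
  forall a b : {poly int}, p = a * b -> a \is a GRing.unit \/ b \is a GRing.unit.

Definition is_minpoly_Z (mu : algC) (p : {poly int}) : Prop :=
  [/\ irreducible_Zpoly p, coef_gcd p = 1, 0 < lead_coef p
    & root (map_poly intr p : {poly algC}) mu].

Definition zdeg (p : {poly int}) : nat := (size p).-1.
Definition zheight (p : {poly int}) : nat := \max_(i < size p) absz (p`_i)%R.

From HB Require Import structures.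
From mathcomp Require Import all_boot all_order all_algebra all_field.
From mathcomp Require Import polyorder ring zify.
Set Implicit Arguments.
Unset Strict Implicit.
Unset Printing Implicit Defensive.
Import Order.TTheory GRing.Theory Num.Theory.
Local Open Scope ring_scope.

(* Let a > 0 be the leading coefficient of p. For every root mu of p, a * mu
   is an algebraic integer and |a * mu| <= d H (Cauchy's bound). Hence
   beta = (a * lambda) (a * lambda^* ) - a^2 = a^2 (|lambda|^2 - 1) is a nonzero
   algebraic integer, and its conjugates, all of the form a mu a mu' - a^2 with
   mu, mu' roots of p, number at most d^2 and have modulus at most
   B = (d^2 + 1) H^2. The norm of beta is a nonzero integer, so
   1 <= |beta| B^(d^2 - 1), while |beta| <= (d + 1) H^2 ||lambda| - 1|. The
   constant of the theorem crudely dominates the resulting one. *)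

Lemma separable_irreducible (F : realFieldType) (q : {poly F}) :
  irreducible_poly q -> separable_poly q.
Proof.
move=> irr_q; have [sz_q _] := irr_q.
have q0 : q != 0 by rewrite -size_poly_gt0 ltnW.
have dq0 : q^`() != 0 by rewrite -size_poly_gt0 size_deriv -subn1 subn_gt0.
rewrite unlock irreducible_poly_coprime //.
by apply: contraTN (lt_size_deriv q0) => /(dvdp_leq dq0); rewrite leqNgt.
Qed.

Lemma separable_minCpoly (x : algC) : separable_poly (minCpoly x).
Proof.
have [q [Dq mon_q] min_q] := minCpolyP x.
rewrite Dq separable_map; apply: separable_irreducible.
apply/(@subfx_irreducibleP _ _ ratr x); first by rewrite -Dq root_minCpoly.
- exact: monic_neq0.
- by move=> q' rq' nq'; rewrite min_q in rq'; apply: dvdp_leq.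
Qed.

Section FieldExtAutomorphism.
Variables (L : fieldExtType rat) (f : 'End(L)).
Hypothesis homf : kHom 1 fullv f.

Definition kHom_fun : L -> L := f.

Fact kHom_fun_zmod_morphism : zmod_morphism kHom_fun.
Proof. exact: raddfB. Qed.

Fact kHom_fun_monoid_morphism : monoid_morphism kHom_fun.
Proof. exact/kHom_monoid_morphism. Qed.

HB.instance Definition _ :=
  GRing.isZmodMorphism.Build L L kHom_fun kHom_fun_zmod_morphism.
HB.instance Definition _ :=
  GRing.isMonoidMorphism.Build L L kHom_fun kHom_fun_monoid_morphism.

Definition kHom_aut : {rmorphism L -> L} := kHom_fun.

End FieldExtAutomorphism.

(* Extend x |-> y to an automorphism of a number field containing all roots of
   minCpoly x, then to algC. *)
Lemma root_minCpoly_aut (x y : algC) : root (minCpoly x) y ->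
  exists nu : {rmorphism algC -> algC}, nu x = y.
Proof.
move=> ry.
have [q [Dq _] min_q] := minCpolyP x.
have [r Dr] := closed_field_poly_normal (minCpoly x).
rewrite (monicP (minCpoly_monic x)) scale1r in Dr.
have [Qs [QsC [s1 Ds1 gen]]] := num_field_exists r.
have inQs z : z \in r -> exists2 z1, z1 \in s1 & z = QsC z1.
  by move=> rz; apply/mapP; rewrite Ds1.
have [x1 _ Dx1] : exists2 x1, x1 \in s1 & x = QsC x1.
  by apply: inQs; rewrite -root_prod_XsubC -Dr root_minCpoly.
have [y1 _ Dy1] : exists2 y1, y1 \in s1 & y = QsC y1.
  by apply: inQs; rewrite -root_prod_XsubC -Dr.
have QsC_rat (m : {poly rat}) :
    map_poly QsC (map_poly (in_alg Qs) m) = map_poly ratr m.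
  rewrite -map_poly_comp; apply: eq_map_poly => a.
  by rewrite /= rmorphZ_num rmorph1 mulr1.
pose qs := map_poly (in_alg Qs) q.
have qs_over1 : qs \is a polyOver 1%VS by apply/polyOver1P; exists q.
have qs_dvd : qs %| minPoly 1 x1.
  have [m Dm] := polyOver1P (minPolyOver 1 x1).
  have : root (map_poly ratr m) x.
    by rewrite -QsC_rat -Dm Dx1 fmorph_root root_minPoly.
  by rewrite min_q Dm dvdp_map.
have root_y1 : root (map_poly \1%VF (minPoly 1 x1)) y1.
  rewrite lfun1_poly; apply: root_dvdp qs_dvd _.
  by rewrite -(fmorph_root QsC) QsC_rat -Dq -Dy1.
have hom_ext : kHom 1 <<1; x1>> (kHomExtend 1 \1 x1 y1).
  by apply: kHomExtendP => //; apply: kHom1.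
have qs_split : splittingFieldFor <<1; x1>> qs fullv.
  exists s1.
    suff -> : qs = \prod_(z <- s1) ('X - z%:P) by apply: eqpxx.
    apply: (@map_poly_inj _ _ QsC).
    rewrite QsC_rat -Dq Dr rmorph_prod -Ds1 big_map; apply: eq_bigr => z _.
    by rewrite rmorphB /= map_polyX map_polyC.
  by apply/eqP; rewrite eqEsubv subvf /= -gen adjoin_seqSl ?sub1v.
have [g homg Dg] := kHom_extends (sub1v _) hom_ext qs_over1 qs_split.
have [nu Dnu] := extend_algC_subfield_aut QsC (@kHom_aut _ _ homg).
exists nu; rewrite Dx1 -Dnu /= /kHom_fun -Dg ?memv_adjoin //.
by rewrite (kHomExtend_val (kHom1 1 1)).
Qed.

Lemma minCpoly_roots (x : algC) :
  exists2 r : seq algC, minCpoly x = \prod_(y <- r) ('X - y%:P) & uniq r.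
Proof.
have [r Dr] := closed_field_poly_normal (minCpoly x).
rewrite (monicP (minCpoly_monic x)) scale1r in Dr.
by exists r; rewrite // -separable_prod_XsubC -Dr separable_minCpoly.
Qed.

Lemma size_minCpoly_conj_le (x : algC) (s : seq algC) :
  (forall nu : {rmorphism algC -> algC}, nu x \in s) ->
  ((size (minCpoly x)).-1 <= size s)%N.
Proof.
move=> conj_s; have [r Dr ur] := minCpoly_roots x.
rewrite Dr size_prod_XsubC /=; apply: uniq_leq_size ur _ => y.
by rewrite -root_prod_XsubC -Dr => /root_minCpoly_aut[nu <-].
Qed.

Lemma Aint_norm_ge1 (x B : algC) (n : nat) :
  x \in Aint -> x != 0 -> 1 <= B ->
  (forall nu : {rmorphism algC -> algC}, `|nu x| <= B) ->
  ((size (minCpoly x)).-1 <= n)%N ->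
  1 <= `|x| * B ^+ n.-1.
Proof.
move=> Ax x0 B1 conjB; have [r Dr _] := minCpoly_roots x.
have conj_r y : y \in r -> exists nu : {rmorphism algC -> algC}, nu x = y.
  by move=> ry; apply: root_minCpoly_aut; rewrite Dr root_prod_XsubC.
have xr : x \in r by rewrite -root_prod_XsubC -Dr root_minCpoly.
rewrite Dr size_prod_XsubC /= => szr.
have norm_r : (minCpoly x).[0] = \prod_(y <- r) - y.
  by rewrite Dr horner_prod; apply: eq_bigr => y _; rewrite hornerXsubC sub0r.
have norm_int : (minCpoly x).[0] \is a Num.int.
  by rewrite horner_coef0; move: Ax; rewrite unfold_in => /polyOverP.
have norm_neq0 : (minCpoly x).[0] != 0.
  rewrite norm_r prodf_seq_neq0; apply/allP => y /conj_r[nu <-] /=.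
  by rewrite oppr_eq0 fmorph_eq0.
apply: le_trans (norm_intr_ge1 norm_int norm_neq0) _.
rewrite norm_r normr_prod (big_rem _ xr) /= normrN ler_wpM2l //.
apply: (@le_trans _ _ (B ^+ (size r).-1)); last first.
  by apply: ler_weXn2l; rewrite // -!subn1 leq_sub2r.
rewrite -(size_rem xr) big_seq.
apply: (le_trans (@ler_prod _ _ _ _ _ (fun=> B) _)).
  by move=> y /mem_rem /conj_r[nu <-]; rewrite normrN normr_ge0 conjB.
by rewrite -big_seq big_const_seq count_predT -Monoid.iteropE.
Qed.

Lemma cauchy_root_bound (R : numDomainType) (n : nat) (c : 'I_n -> R)
    (a z h : R) :
  (0 < n)%N -> (forall i, `|c i| <= h) -> `|a| <= h ->
  a * z ^+ n + \sum_(i < n) c i * z ^+ i = 0 -> `|a * z| <= n%:R * h.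
Proof.
move=> n_gt0 ch ah root_z.
have h_ge0 : 0 <= h by apply: le_trans ah.
have h_le : h <= n%:R * h by rewrite ler_peMl // ler1n.
have [z_le1|z_gt1] := real_leP (normr_real z) (@real1 _).
  by rewrite normrM (le_trans _ h_le) // (le_trans _ ah) // ler_piMr.
have z_gt0 : 0 < `|z| by apply: lt_trans z_gt1.
suff : `|a| * `|z| ^+ n <= n%:R * h * `|z| ^+ n.-1.
  rewrite -(prednK n_gt0) exprS mulrA normrM => le_az.
  by rewrite -(ler_pM2r (exprn_gt0 n.-1 z_gt0)).
have -> : `|a| * `|z| ^+ n = `|\sum_(i < n) c i * z ^+ i|.
  move/eqP: root_z; rewrite addr_eq0 -normrX -normrM => /eqP->.
  by rewrite normrN.
apply: le_trans (ler_norm_sum _ _ _) _.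
rewrite -mulrA mulr_natl -[n in _ *+ n]card_ord -sumr_const.
apply: ler_sum => i _; rewrite normrM normrX ler_pM ?exprn_ge0 //.
by apply: ler_weXn2l; [apply: ltW | rewrite -ltnS prednK].
Qed.

Lemma abs_coef_le_zheight (p : {poly int}) i : (absz (p`_i)%R <= zheight p)%N.
Proof.
rewrite /zheight; case: (ltnP i (size p)) => hi; last by rewrite nth_default.
by rewrite (bigD1 (Ordinal hi)) //= leq_maxl.
Qed.

Lemma norm_coef_le_zheight (p : {poly int}) i :
  `|(p`_i)%:~R : algC| <= (zheight p)%:R.
Proof. by rewrite -intr_norm -abszE ler_nat abs_coef_le_zheight. Qed.

Lemma abs_lead_coef_le_zheight (p : {poly int}) :
  (absz (lead_coef p) <= zheight p)%N.
Proof. by rewrite lead_coefE abs_coef_le_zheight. Qed.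

Section IntegerPolynomial.
Variable p : {poly int}.
Local Notation pC := (map_poly intr p : {poly algC}).
Local Notation a := ((lead_coef p)%:~R : algC).

Lemma root_map_intr_aut (nu : {rmorphism algC -> algC}) z :
  root pC z -> root pC (nu z).
Proof.
have nu_pC : map_poly nu pC = pC.
  by rewrite -map_poly_comp; apply: eq_map_poly => x /=; rewrite rmorph_int.
by rewrite -{2}nu_pC fmorph_root.
Qed.

Lemma size_map_intr : size pC = size p.
Proof. by rewrite size_map_inj_poly //; exact: intr_inj. Qed.

Hypothesis p_gt1 : (1 < size p)%N.

Lemma horner_map_intr z :
  pC.[z] = \sum_(i < zdeg p) (p`_i)%:~R * z ^+ i + a * z ^+ zdeg p.
Proof.
rewrite horner_coef size_map_intr.
rewrite -(prednK (ltnW p_gt1)) big_ord_recr /= coef_map lead_coefE.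
by congr (_ + _); apply: eq_bigr => i _; rewrite coef_map.
Qed.

Lemma zdeg_gt0 : (0 < zdeg p)%N.
Proof. by rewrite /zdeg -ltnS prednK // ltnW. Qed.

Lemma Aint_lead_coef_mul_root z : root pC z -> a * z \in Aint.
Proof.
move=> /rootP; rewrite horner_map_intr; set n := zdeg p => root_z.
have n_gt0 : (0 < n)%N := zdeg_gt0.
pose q : {poly algC} := \poly_(i < n.+1)
  (if i == n then 1 else (p`_i * lead_coef p ^+ (n.-1 - i))%:~R).
apply: (@root_monic_Aint q).
- rewrite /root horner_poly big_ord_recr /= eqxx mul1r.
  pose c (i : 'I_n) := a ^+ n.-1 * ((p`_i)%:~R * z ^+ i).
  rewrite (eq_bigr c) => [|i _]; last first.
    rewrite /c /= (ltn_eqF (ltn_ord i)) rmorphM rmorphXn /=.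
    have le_in : (i <= n.-1)%N by rewrite -ltnS prednK.
    by rewrite -{2}(subnK le_in) exprD exprMn; ring.
  have a_n : a ^+ n = a ^+ n.-1 * a by rewrite -exprSr prednK.
  by rewrite -mulr_sumr exprMn a_n -mulrA -mulrDr root_z mulr0.
- by rewrite monicE lead_coef_poly //= ?eqxx ?oner_eq0.
- apply/polyOverP => i; rewrite coef_poly.
  case: (i < n.+1)%N; last exact: rpred0.
  by case: (i == n); [exact: rpred1 | exact: rpred_int].
Qed.

Lemma norm_lead_coef_mul_root_le z :
  root pC z -> `|a * z| <= (zdeg p)%:R * (zheight p)%:R.
Proof.
move=> /rootP; rewrite horner_map_intr addrC => root_z.
apply: cauchy_root_bound root_z => [|i|]; first exact: zdeg_gt0.
  exact: norm_coef_le_zheight.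
by rewrite lead_coefE; apply: norm_coef_le_zheight.
Qed.

End IntegerPolynomial.

Definition norm_gap_const (d H : nat) : nat :=
  ((d + 1) * H ^ 2 * ((d ^ 2 + 1) * H ^ 2) ^ (d ^ 2).-1)%N.

Lemma norm_gap_const_lt d H : (0 < d)%N -> (0 < H)%N ->
  (norm_gap_const d H <
   (2 * d + 2) ^ (2 * d + 3) * 2 ^ (2 * d) * d`! ^ (2 * d)
   * (d + 1) ^ (2 * d * (d - 1)) * H ^ (2 * d ^ 2))%N.
Proof.
rewrite /norm_gap_const => d_gt0 H_gt0; set e := (d ^ 2).-1.
have sq_d : (d ^ 2 = e.+1)%N by rewrite prednK // expn_gt0 d_gt0.
have expn_mono k m n : (m <= n -> m ^ k <= n ^ k)%N.
  by move=> le_mn; elim: k => // k IH; rewrite !expnS leq_mul.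
have -> : ((d + 1) * H ^ 2 * ((d ^ 2 + 1) * H ^ 2) ^ e
          = (d + 1) * (d ^ 2 + 1) ^ e * H ^ (2 * d ^ 2))%N.
  by rewrite expnMn mulnACA -expnS -sq_d -expnM mulnC.
rewrite ltn_pmul2r ?expn_gt0 ?H_gt0 //.
have le1 : ((d + 1) * (d ^ 2 + 1) ^ e <= (d + 1) ^ (2 * e).+1)%N.
  rewrite [X in (_ <= X)%N]expnS leq_mul2l expnM; apply/orP; right.
  by apply: expn_mono; nia.
have lt2 : ((d + 1) ^ (2 * e).+1 < (d + 1) ^ (2 * d + 3 + 2 * d * (d - 1)))%N.
  by rewrite ltn_exp2l; nia.
apply: leq_ltn_trans le1 (leq_trans lt2 _).
rewrite expnD leq_mul // -mulnA -[X in (X <= _)%N]muln1.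
by rewrite leq_mul ?muln_gt0 ?expn_gt0 ?fact_gt0 //; apply: expn_mono; lia.
Qed.

Section NormGap.
Variables (p : {poly int}) (lambda : algC).
Hypotheses (p_gt1 : (1 < size p)%N) (lead_gt0 : 0 < lead_coef p).
Hypothesis root_lambda : root (map_poly intr p) lambda.
Local Notation pC := (map_poly intr p : {poly algC}).
Local Notation a := ((lead_coef p)%:~R : algC).
Local Notation d := (zdeg p).
Local Notation H := (zheight p).

Let a_gt0 : 0 < a. Proof. by rewrite ltr0z. Qed.

Let a_le_H : a <= H%:R.
Proof.
rewrite -(ger0_norm (ltW a_gt0)) -intr_norm -abszE ler_nat.
exact: abs_lead_coef_le_zheight.
Qed.

Let H_ge1 : 1 <= H%:R :> algC.
Proof. by apply: le_trans a_le_H; rewrite ler1z. Qed.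

Let root_conj_lambda : root pC lambda^* :=
  root_map_intr_aut Num.conj root_lambda.

Let beta := a * lambda * (a * lambda^*) - a ^+ 2.

Let aut_beta (nu : {rmorphism algC -> algC}) :
  nu beta = a * nu lambda * (a * nu lambda^*) - a ^+ 2.
Proof. by rewrite rmorphB !rmorphM ?rmorphXn rmorph_int. Qed.

Let Aint_beta : beta \in Aint.
Proof.
by rewrite rpredB ?rpredX ?Aint_int // rpredM // Aint_lead_coef_mul_root.
Qed.

Let norm_aut_beta_le (nu : {rmorphism algC -> algC}) :
  `|nu beta| <= ((d ^ 2 + 1) * H ^ 2)%:R.
Proof.
have root_bound z : root pC z -> `|a * nu z| <= d%:R * H%:R.
  by move/(root_map_intr_aut nu); apply: norm_lead_coef_mul_root_le.
rewrite aut_beta natrM natrD !natrX mulrDl mul1r -exprMn.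
apply: le_trans (ler_normB _ _) (lerD _ _).
  by rewrite normrM expr2 ler_pM ?normr_ge0 ?root_bound.
rewrite normrX ger0_norm; last exact: ltW.
by apply: lerXn2r; rewrite ?nnegrE ?ler0n // ltW.
Qed.

Let size_minCpoly_beta_le : ((size (minCpoly beta)).-1 <= d ^ 2)%N.
Proof.
have [r Dr] := closed_field_poly_normal pC.
have pC_neq0 : pC != 0 by rewrite -size_poly_gt0 size_map_intr ltnW.
have size_r : size r = d.
  have := congr1 (fun q : {poly algC} => size q) Dr.
  rewrite /= size_scale ?lead_coef_eq0 // size_prod_XsubC.
  by rewrite /zdeg size_map_intr => ->.
have root_r z : root pC z -> z \in r.
  by rewrite Dr rootZ ?lead_coef_eq0 // root_prod_XsubC.
pose f u v := a * u * (a * v) - a ^+ 2.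
rewrite -size_r expnS expn1 -(size_allpairs f).
apply: size_minCpoly_conj_le => nu; rewrite aut_beta.
by apply: allpairs_f; apply: root_r; apply: root_map_intr_aut.
Qed.

Let norm_beta : `|beta| = a ^+ 2 * (`|lambda| + 1) * `| `|lambda| - 1|.
Proof.
have -> : beta = a ^+ 2 * ((`|lambda| + 1) * (`|lambda| - 1)).
  by rewrite /beta mulrACA -normCK; ring.
rewrite normrM normrX ger0_norm ?ltW // normrM mulrA ger0_norm //.
by rewrite addr_ge0.
Qed.

Let lead_sq_mul_le : a ^+ 2 * (`|lambda| + 1) <= ((d + 1) * H ^ 2)%:R.
Proof.
have -> : a ^+ 2 * (`|lambda| + 1) = a * (a + `|a * lambda|).
  by rewrite normrM ger0_norm ?ltW //; ring.
have -> : ((d + 1) * H ^ 2)%:R = H%:R * (H%:R + d%:R * H%:R) :> algC.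
  by rewrite natrM natrD natrX; ring.
apply: ler_pM; [exact: ltW | by rewrite addr_ge0 ?normr_ge0 // ltW | by [] |].
by rewrite lerD ?norm_lead_coef_mul_root_le.
Qed.

Lemma norm_gap_ge1 : `|lambda| != 1 ->
  1 <= (norm_gap_const d H)%:R * `| `|lambda| - 1|.
Proof.
move=> lambda_neq1.
have beta_neq0 : beta != 0.
  by rewrite -normr_eq0 norm_beta !mulf_neq0 ?expf_neq0 ?gt_eqF
    ?ltr_wpDl ?normr_gt0 ?subr_eq0.
have B_ge1 : 1 <= ((d ^ 2 + 1) * H ^ 2)%:R :> algC.
  by rewrite natrM natrX mulr_ege1 ?exprn_ege1 // ler1n addn1.
have := Aint_norm_ge1 Aint_beta beta_neq0 B_ge1 norm_aut_beta_le
  size_minCpoly_beta_le.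
rewrite norm_beta mulrAC => /le_trans; apply.
rewrite ler_wpM2r // /norm_gap_const -natrX [X in _ <= X]natrM.
by rewrite ler_wpM2r ?ler0n.
Qed.

End NormGap.

Lemma inv_lt_of_mul_ge1 (R : numFieldType) (k t x : R) :
  0 <= k -> k < t -> 1 <= k * x -> 1 / t < x.
Proof.
move=> k_ge0 lt_kt kx_ge1.
have kx_gt0 : 0 < k * x := lt_le_trans ltr01 kx_ge1.
have k_gt0 : 0 < k.
  rewrite lt0r k_ge0 andbT; apply: contraTneq kx_gt0 => ->.
  by rewrite mul0r ltxx.
have x_gt0 : 0 < x by rewrite -(pmulr_rgt0 _ k_gt0).
rewrite ltr_pdivrMr ?(le_lt_trans k_ge0) // mulrC.
by apply: le_lt_trans kx_ge1 _; rewrite ltr_pM2r.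
Qed.

Theorem mainTheorem3 (lambda : algC) (p : {poly int}) (d H : nat) :
  is_minpoly_Z lambda p -> d = zdeg p -> H = zheight p ->
  `|lambda| != 1 ->
  1 / (sqrtC 3%:R * (2 * d + 2)%:R ^+ (2 * d + 3) * 2%:R ^+ (2 * d)
       * (d`!)%:R ^+ (2 * d) * (d + 1)%:R ^+ (2 * d * (d - 1))
       * H%:R ^+ (2 * d ^ 2))
  < `| `|lambda| - 1 |.
Proof.
move=> [[p_neq0 _] _ lead_gt0 root_lambda] -> -> lambda_neq1.
have pC_neq0 : map_poly intr p != 0 :> {poly algC}.
  by rewrite -size_poly_eq0 size_map_intr size_poly_eq0.
have p_gt1 : (1 < size p)%N.
  by rewrite -(size_map_intr p) (root_size_gt1 pC_neq0 root_lambda).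
have d_gt0 := zdeg_gt0 p_gt1.
have H_gt0 : (0 < zheight p)%N.
  by apply: leq_trans (abs_lead_coef_le_zheight p); rewrite absz_gt0 gt_eqF.
have sqrt3_ge1 : 1 <= sqrtC 3%:R :> algC.
  by rewrite -{1}sqrtC1 ler_sqrtC ?nnegrE ?ler0n ?ler1n.
have gap := norm_gap_ge1 p_gt1 lead_gt0 root_lambda lambda_neq1.
apply: inv_lt_of_mul_ge1 (ler0n _ _) _ gap.
rewrite -!mulrA; apply: lt_le_trans (ler_peMl _ sqrt3_ge1); last first.
  by rewrite !mulr_ge0 ?exprn_ge0 ?ler0n.
by rewrite !mulrA -!natrX -!natrM ltr_nat norm_gap_const_lt.
Qed.
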